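(* For every zero-normalized $\Gamma$-semimodule $\Delta$ one has $\widehat{\widehat{\Delta}}=\Delta$.
   Context: Let $m,n$ be coprime positive integers and $\Gamma=\{am+bn:a,b\in\mathbb{Z}_{\ge0}\}$. A $\Gamma$-semimodule is $\Delta\subset\mathbb{Z}_{\ge0}$ with $\Delta+\Gamma\subset\Delta$; it is zero-normalized if $\min\Delta=0$. The dual is $\Delta^*=\{\varphi\in\mathbb{Z}:\varphi+\Delta\subset\Gamma\}$, and $\widehat\Delta=\Delta^*-\min\Delta^*$ is its zero-normalization; equivalently $\widehat\Delta=\max(\mathbb{Z}\setminus\Delta)-(\mathbb{Z}\setminus\Delta)$. *)

From Stdlib Require Import ZArith Lia.
Open Scope Z_scope.

Definition inGamma (m n g : Z) : Prop :=
  exists a b : Z, 0 <= a /\ 0 <= b /\ g = a * m + b * n.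

Definition isMin (S : Z -> Prop) (mu : Z) : Prop :=
  S mu /\ forall x, S x -> mu <= x.

Definition semimodule (m n : Z) (D : Z -> Prop) : Prop :=
  (forall x, D x -> 0 <= x) /\
  (forall x g, D x -> inGamma m n g -> D (x + g)).

Definition zero_normalized (D : Z -> Prop) : Prop := isMin D 0.

Definition dual (m n : Z) (D : Z -> Prop) : Z -> Prop :=
  fun phi => forall d, D d -> inGamma m n (phi + d).

Definition hat (m n : Z) (D : Z -> Prop) : Z -> Prop :=
  fun x => exists mu, isMin (dual m n D) mu /\ dual m n D (x + mu).

(* Let F = mn - m - n be the Frobenius number of Gamma.  Exactly one of z and F - z lies in
   Gamma, so for a Gamma-closed set E one has phi in E^* iff F - phi is not in E.  Hence if K is
   the largest integer outside E, then hat E = { x | K - x is not in E }.  When 0 is the minimum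
   of E, the largest integer outside hat E is again K, and applying the description twice gives
   hat (hat E) = { x | ~ ~ E x } = E. *)
From Stdlib Require Import ZArith Lia Classical.
Open Scope Z_scope.

Definition frobenius (m n : Z) : Z := m * n - m - n.

Definition gamma_closed (m n : Z) (E : Z -> Prop) : Prop :=
  forall x g, E x -> inGamma m n g -> E (x + g).

Lemma inGamma0 (m n : Z) : inGamma m n 0.
Proof. exists 0, 0; lia. Qed.

Lemma inGamma_ge0 (m n g : Z) : 0 <= m -> 0 <= n -> inGamma m n g -> 0 <= g.
Proof. intros hm hn (a & b & ha & hb & ->); nia. Qed.

Lemma Z_max_exists (P : Z -> Prop) (a B : Z) :
  P a -> (forall y, P y -> y <= B) -> exists K, P K /\ forall y, P y -> y <= K.
Proof.
  intros Pa HB.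
  enough (Hk : forall (k : nat) (a0 : Z), P a0 -> B - a0 <= Z.of_nat k ->
            exists K, P K /\ forall y, P y -> y <= K)
    by (apply (Hk (Z.to_nat (B - a)) a Pa); lia).
  induction k as [|k IH]; intros a0 Pa0 Hk.
  - exists a0; split; [exact Pa0|]. intros y Py; specialize (HB _ Py); lia.
  - destruct (classic (exists y, P y /\ a0 < y)) as [(y & Py & Hy)|Hno].
    + apply (IH y Py); specialize (HB _ Py); lia.
    + exists a0; split; [exact Pa0|]. intros y Py.
      apply Z.nlt_ge; intros Hy; apply Hno; eauto.
Qed.

Section Frobenius.
Variables (m n : Z) (hm : 0 < m) (hn : 0 < n) (hmn : Z.gcd m n = 1).

Lemma Z_repr_coef_bounded (z : Z) : exists a b, 0 <= a < n /\ z = a * m + b * n.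
Proof.
  destruct (Z.gcd_bezout _ _ _ hmn) as (u & v & Huv).
  exists ((z * u) mod n), (z * v + m * ((z * u) / n)).
  split; [apply Z.mod_pos_bound; lia|].
  pose proof (Z.div_mod (z * u) n ltac:(lia)) as Hdiv.
  transitivity (z * (u * m + v * n)); [rewrite Huv; ring|].
  assert (E : (z * u) mod n = z * u - n * ((z * u) / n)) by lia.
  rewrite E; ring.
Qed.

Lemma inGamma_or_frobenius_sub (z : Z) :
  inGamma m n z \/ inGamma m n (frobenius m n - z).
Proof.
  destruct (Z_repr_coef_bounded z) as (a & b & Ha & ->).
  destruct (Z_le_gt_dec 0 b) as [Hb|Hb].
  - left; exists a, b; lia.
  - right; exists (n - 1 - a), (- b - 1); unfold frobenius; repeat split; try lia; ring.
Qed.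

Lemma inGamma_frobenius_sub_excl (z : Z) :
  inGamma m n z -> ~ inGamma m n (frobenius m n - z).
Proof.
  intros (a & b & ha & hb & Hz) (a' & b' & ha' & hb' & Hz').
  assert (Hsum : (a + a' + 1) * m + (b + b' + 1) * n = m * n)
    by (unfold frobenius in Hz'; lia).
  assert (Hn : (n | a + a' + 1)).
  { apply (Z.gauss _ m); [exists (m - b - b' - 1); nia|now rewrite Z.gcd_comm]. }
  assert (Hm : (m | b + b' + 1)).
  { apply (Z.gauss _ n); [exists (n - a - a' - 1); nia|exact hmn]. }
  destruct Hn as [k Hk], Hm as [l Hl].
  assert (1 <= k) by nia. assert (1 <= l) by nia. nia.
Qed.

Lemma inGamma_gt_frobenius (y : Z) : frobenius m n < y -> inGamma m n y.
Proof.
  intros Hy. destruct (inGamma_or_frobenius_sub y) as [|Hsub]; [assumption|].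
  apply inGamma_ge0 in Hsub; lia.
Qed.

Section ClosedSet.
Variables (E : Z -> Prop) (hE : gamma_closed m n E).

Lemma dual_iff (phi : Z) : dual m n E phi <-> ~ E (frobenius m n - phi).
Proof.
  split.
  - intros Hd HE; specialize (Hd _ HE).
    replace (phi + (frobenius m n - phi)) with (frobenius m n - 0) in Hd by ring.
    exact (inGamma_frobenius_sub_excl 0 (inGamma0 m n) Hd).
  - intros HE d Hd. destruct (inGamma_or_frobenius_sub (phi + d)) as [|Hsub]; [assumption|].
    exfalso; apply HE.
    replace (frobenius m n - phi) with (d + (frobenius m n - (phi + d))) by ring.
    exact (hE _ _ Hd Hsub).
Qed.

Variables (K : Z) (hK : ~ E K) (hKmax : forall y, ~ E y -> y <= K).

Lemma isMin_dual : isMin (dual m n E) (frobenius m n - K).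
Proof.
  split.
  - apply dual_iff. now replace (frobenius m n - (frobenius m n - K)) with K by ring.
  - intros y Hy. apply dual_iff, hKmax in Hy. lia.
Qed.

Lemma hat_iff (x : Z) : hat m n E x <-> ~ E (K - x).
Proof.
  replace (K - x) with (frobenius m n - (x + (frobenius m n - K))) by ring.
  rewrite <- dual_iff. split.
  - intros (mu & [Hmu Hmu_min] & Hd).
    destruct isMin_dual as [HK HK_min].
    now replace (frobenius m n - K) with mu by (apply Hmu_min in HK; apply HK_min in Hmu; lia).
  - intros Hd. exists (frobenius m n - K). split; [exact isMin_dual|exact Hd].
Qed.

Lemma hat_closed : gamma_closed m n (hat m n E).
Proof.
  intros x g Hx Hg. apply hat_iff. apply hat_iff in Hx.
  intros HE; apply Hx.
  replace (K - x) with ((K - (x + g)) + g) by ring. exact (hE _ _ HE Hg).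
Qed.

Lemma hat_gap_max (E0 : E 0) (Epos : forall x, E x -> 0 <= x) :
  ~ hat m n E K /\ forall y, ~ hat m n E y -> y <= K.
Proof.
  split.
  - rewrite hat_iff. now rewrite Z.sub_diag.
  - intros y Hy. rewrite hat_iff in Hy. apply NNPP, Epos in Hy. lia.
Qed.

End ClosedSet.

Lemma gap_max_exists (D : Z -> Prop) :
  semimodule m n D -> D 0 -> exists K, ~ D K /\ forall y, ~ D y -> y <= K.
Proof.
  intros [Dpos Dcl] D0. apply (Z_max_exists _ (-1) (frobenius m n)).
  - intros H; apply Dpos in H; lia.
  - intros y Hy. apply Z.nlt_ge; intros Hlt; apply Hy.
    exact (Dcl 0 y D0 (inGamma_gt_frobenius y Hlt)).
Qed.

End Frobenius.

Theorem mainTheorem10 (m n : Z) (hm : 0 < m) (hn : 0 < n) (hmn : Z.gcd m n = 1)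
  (D : Z -> Prop) (hD : semimodule m n D) (h0 : zero_normalized D) :
  forall x : Z, hat m n (hat m n D) x <-> D x.
Proof.
  destruct h0 as [D0 _].
  destruct (gap_max_exists m n hm hn hmn D hD D0) as (K & HK & HKmax).
  destruct hD as [Dpos Dcl].
  destruct (hat_gap_max m n hm hn hmn D Dcl K HK HKmax D0 Dpos) as [HhatK HhatKmax].
  intros x.
  rewrite (hat_iff m n hm hn hmn _ (hat_closed m n hm hn hmn D Dcl K HK HKmax) K HhatK HhatKmax).
  rewrite (hat_iff m n hm hn hmn D Dcl K HK HKmax).
  replace (K - (K - x)) with x by ring.
  split; [apply NNPP|tauto].
Qed.
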